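(* For all types $A$, $B$, $C$ and every type variable $X$: if $A \simeq B$, then $A[C/X] \simeq B[C/X]$.
   Context: Types and rows share one grammar: $A,B,C,\rho ::= X \mid \alpha \mid \star \mid \iota \mid A\to B \mid \forall X{:}K.\,A \mid [\rho] \mid \langle\rho\rangle \mid \cdot \mid \ell{:}A;\rho$, where $X$ ranges over type variables (bound by $\forall$), $\alpha$ over type names, $\star$ is the dynamic type (also serving as the dynamic row), $\iota$ over base types, $[\rho]$ and $\langle\rho\rangle$ are record and variant types, $\cdot$ is the empty row, $\ell$ ranges over labels, and $K\in\{\mathsf T,\mathsf R\}$ is a kind. Types are identified up to renaming of bound variables; $\mathit{ftv}(A)$ is the set of free type variables, and $A[C/X]$ denotes capture-avoiding substitution of $C$ for $X$ in $A$. Row matching $\rho \triangleright_\ell A,\rho'$ is defined by: $(\ell{:}A;\rho)\triangleright_\ell A,\rho$; if $\ell'\neq\ell$ and $\rho\triangleright_\ell A,\rho'$ then $(\ell'{:}B;\rho)\triangleright_\ell A,(\ell'{:}B;\rho')$; and $\star\triangleright_\ell \star,\star$. $\mathbf{QPoly}(A)$ holds iff $A$ is not of the form $\forall X{:}K.\,B$ and $\star$ occurs in $A$. Consistency $\simeq$ is defined inductively: $A\simeq A$; $\star\simeq A$; $A\simeq\star$; $A_1\to A_2\simeq B_1\to B_2$ if $A_1\simeq B_1$ and $A_2\simeq B_2$; $\forall X{:}K.A\simeq\forall X{:}K.B$ if $A\simeq B$; $\forall X{:}K.A\simeq B$ if $\mathbf{QPoly}(B)$, $X\notin\mathit{ftv}(B)$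 and $A\simeq B$; $A\simeq\forall X{:}K.B$ if $\mathbf{QPoly}(A)$, $X\notin\mathit{ftv}(A)$ and $A\simeq B$; $[\rho_1]\simeq[\rho_2]$ and $\langle\rho_1\rangle\simeq\langle\rho_2\rangle$ if $\rho_1\simeq\rho_2$; $\ell{:}A;\rho_1\simeq B$ if $B\triangleright_\ell B',\rho_2$, $A\simeq B'$ and $\rho_1\simeq\rho_2$; $A\simeq \ell{:}B;\rho_2$ if $A\triangleright_\ell A',\rho_1$, $A'\simeq B$ and $\rho_1\simeq\rho_2$. *)

From Stdlib Require Import Arith.

Inductive kind : Type := KT | KR.

(* Types and rows share one grammar.
   - TVar n  : type variable X, as a de Bruijn index (free variables are the
               indices not captured by an enclosing TAll)
   - TName a : type name alpha
   - TDyn    : the dynamic type / dynamic row  (star)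
   - TBase i : base type iota
   - TArr A B, TAll K A (binds index 0 in A), TRec rho = [rho],
     TVariant rho = <rho>, TEmpty = the empty row, TExt l A rho = l:A;rho *)
Inductive ty : Type :=
| TVar (n : nat)
| TName (a : nat)
| TDyn
| TBase (i : nat)
| TArr (A B : ty)
| TAll (K : kind) (A : ty)
| TRec (rho : ty)
| TVariant (rho : ty)
| TEmpty
| TExt (l : nat) (A rho : ty).

Fixpoint shift (c : nat) (A : ty) : ty :=
  match A with
  | TVar n => if c <=? n then TVar (S n) else TVar n
  | TName a => TName a
  | TDyn => TDyn
  | TBase i => TBase i
  | TArr A1 A2 => TArr (shift c A1) (shift c A2)
  | TAll K A1 => TAll K (shift (S c) A1)
  | TRec r => TRec (shift c r)
  | TVariant r => TVariant (shift c r)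
  | TEmpty => TEmpty
  | TExt l A1 r => TExt l (shift c A1) (shift c r)
  end.

(* This is capture-avoiding substitution A[C/X] of a single named variable. *)
Fixpoint subst_at (d X : nat) (C : ty) (A : ty) : ty :=
  match A with
  | TVar n => if n =? X + d then Nat.iter d (shift 0) C else TVar n
  | TName a => TName a
  | TDyn => TDyn
  | TBase i => TBase i
  | TArr A1 A2 => TArr (subst_at d X C A1) (subst_at d X C A2)
  | TAll K A1 => TAll K (subst_at (S d) X C A1)
  | TRec r => TRec (subst_at d X C r)
  | TVariant r => TVariant (subst_at d X C r)
  | TEmpty => TEmpty
  | TExt l A1 r => TExt l (subst_at d X C A1) (subst_at d X C r)
  end.

Definition subst (A : ty) (C : ty) (X : nat) : ty := subst_at 0 X C A.

Inductive row_match : ty -> nat -> ty -> ty -> Prop :=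
| rm_head : forall l A rho, row_match (TExt l A rho) l A rho
| rm_skip : forall l l' A B rho rho',
    l' <> l -> row_match rho l A rho' ->
    row_match (TExt l' B rho) l A (TExt l' B rho')
| rm_dyn : forall l, row_match TDyn l TDyn TDyn.

Fixpoint dyn_occurs (A : ty) : bool :=
  match A with
  | TVar _ | TName _ | TBase _ | TEmpty => false
  | TDyn => true
  | TArr A1 A2 => dyn_occurs A1 || dyn_occurs A2
  | TAll _ A1 => dyn_occurs A1
  | TRec r | TVariant r => dyn_occurs r
  | TExt _ A1 r => dyn_occurs A1 || dyn_occurs r
  end.

Definition is_forall (A : ty) : Prop :=
  match A with TAll _ _ => True | _ => False end.

Definition QPoly (A : ty) : Prop := ~ is_forall A /\ dyn_occurs A = true.

(* Consistency. In the quasi-polymorphic rules, the side condition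
   X notin ftv(B) (with X the bound variable, chosen fresh up to alpha)
   becomes: compare the body A with B shifted past the binder. *)
Inductive consistent : ty -> ty -> Prop :=
| c_refl : forall A, consistent A A
| c_dynl : forall A, consistent TDyn A
| c_dynr : forall A, consistent A TDyn
| c_arr : forall A1 A2 B1 B2,
    consistent A1 B1 -> consistent A2 B2 ->
    consistent (TArr A1 A2) (TArr B1 B2)
| c_all : forall K A B, consistent A B -> consistent (TAll K A) (TAll K B)
| c_alll : forall K A B, QPoly B -> consistent A (shift 0 B) ->
    consistent (TAll K A) B
| c_allr : forall K A B, QPoly A -> consistent (shift 0 A) B ->
    consistent A (TAll K B)
| c_rec : forall r1 r2, consistent r1 r2 -> consistent (TRec r1) (TRec r2)
| c_variant : forall r1 r2, consistent r1 r2 ->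
    consistent (TVariant r1) (TVariant r2)
| c_extl : forall l A r1 B B' r2,
    row_match B l B' r2 -> consistent A B' -> consistent r1 r2 ->
    consistent (TExt l A r1) B
| c_extr : forall l A A' r1 B r2,
    row_match A l A' r1 -> consistent A' B -> consistent r1 r2 ->
    consistent A (TExt l B r2).

Notation "A ≃ B" := (consistent A B) (at level 70).

(* Substitution preserves row
   matching and QPoly (a type containing a star is not a variable, so it stays
   non-forall and keeps its star).  The only real work is in the
   quasi-polymorphic rules, where substituting under the new binder must commute
   with the shift that pushes the other side past it. *)
From Stdlib Require Import Arith Lia.

Ltac case_nat_tests :=
  repeat (cbn [shift subst_at]; match goal with
    | |- context [?a <=? ?b] => destruct (Nat.leb_spec a b)
    | |- context [?a =? ?b] => destruct (Nat.eqb_spec a b)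
    end).

Lemma shift_shift_le (A : ty) (k c : nat) :
  k <= c -> shift (S c) (shift k A) = shift k (shift c A).
Proof.
  revert k c; induction A as [n| | | | A1 IH1 A2 IH2 |K A IH| | | |l A1 IH1 r IH2];
    intros k c Hkc; simpl; try solve [f_equal; auto].
  - case_nat_tests; lia || reflexivity.
  - f_equal; apply IH; lia.
Qed.

Lemma shift_iter_shift (d c : nat) (C : ty) :
  c <= d -> shift c (Nat.iter d (shift 0) C) = Nat.iter (S d) (shift 0) C.
Proof.
  revert c; induction d as [|d IH]; intros c Hcd.
  - replace c with 0 by lia; reflexivity.
  - destruct c as [|c]; [reflexivity|].
    change (Nat.iter (S d) (shift 0) C) with (shift 0 (Nat.iter d (shift 0) C)).
    rewrite shift_shift_le, IH by lia; reflexivity.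
Qed.

Lemma subst_at_shift (B C : ty) (d c X : nat) :
  c <= d -> subst_at (S d) X C (shift c B) = shift c (subst_at d X C B).
Proof.
  revert d c; induction B as [n| | | | B1 IH1 B2 IH2 |K B IH| | | |l B1 IH1 r IH2];
    intros d c Hcd; simpl; try solve [f_equal; auto].
  - case_nat_tests; try lia; try reflexivity.
    symmetry; apply shift_iter_shift; lia.
  - f_equal; apply IH; lia.
Qed.

Lemma row_match_subst_at (B B' r C : ty) (l d X : nat) :
  row_match B l B' r ->
  row_match (subst_at d X C B) l (subst_at d X C B') (subst_at d X C r).
Proof. induction 1; simpl; constructor; auto. Qed.

Lemma dyn_occurs_subst_at (A C : ty) (d X : nat) :
  dyn_occurs A = true -> dyn_occurs (subst_at d X C A) = true.
Proof.
  revert d; induction A; intros d H; simpl in *;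
    rewrite ?Bool.orb_true_iff in *; intuition (discriminate || auto).
Qed.

Lemma QPoly_subst_at (A C : ty) (d X : nat) : QPoly A -> QPoly (subst_at d X C A).
Proof.
  intros [Hnall Hdyn]; split.
  - destruct A; simpl in *; discriminate || auto.
  - apply dyn_occurs_subst_at; exact Hdyn.
Qed.

Lemma consistent_subst_at (A B C : ty) (d X : nat) :
  consistent A B -> consistent (subst_at d X C A) (subst_at d X C B).
Proof.
  intros HAB; revert d; induction HAB; intros d; simpl.
  - apply c_refl.
  - apply c_dynl.
  - apply c_dynr.
  - apply c_arr; auto.
  - apply c_all; auto.
  - apply c_alll; [apply QPoly_subst_at; assumption|].
    rewrite <- subst_at_shift by lia; auto.
  - apply c_allr; [apply QPoly_subst_at; assumption|].
    rewrite <- subst_at_shift by lia; auto.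
  - apply c_rec; auto.
  - apply c_variant; auto.
  - eapply c_extl; eauto using row_match_subst_at.
  - eapply c_extr; eauto using row_match_subst_at.
Qed.

Theorem mainTheorem13 :
  forall (A B C : ty) (X : nat),
    consistent A B -> consistent (subst A C X) (subst B C X).
Proof.
  intros A B C X HAB; apply consistent_subst_at; exact HAB.
Qed.
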